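(* Let $\mathcal{A}\in\mathbb{R}^{m\times n\times p}$, $\mathcal{B}\in\mathbb{R}^{m\times l\times p}$, let $T\subset\mathcal{P}([n])$ be a finite nonempty collection of column blocks, and let $\omega>0$. Let $\mathcal{X}^{(k)}$ be the iterates of the TRBAGS method (defined in the context) with step size $\omega$, started from a fixed initial tensor $\mathcal{X}^{(0)}\in\mathbb{R}^{n\times l\times p}$, where the blocks $\tau_1,\tau_2,\dots$ are sampled independently and uniformly from $T$. Let $\mathcal{X}^\ddagger$ be a minimizer of $\|\mathcal{A}\mathcal{X}-\mathcal{B}\|_F^2$, let $\sigma^2=\max_{\tau\in T}\sigma_{\max}^2(\mathrm{bcirc}(\mathcal{A}_{:\tau:}))$ and $c_{\min}(T)=\min_{i\in[n]}|\{\tau\in T: i\in\tau\}|$. Suppose $2\omega-\omega^2\sigma^2>0$ and set $$\rho=1-(2\omega-\omega^2\sigma^2)\frac{c_{\min}(T)}{|T|}\sigma_{\min}^2(\mathrm{bcirc}(\mathcal{A})).$$ Then for every $k\ge0$, $$\mathbb{E}\big[\|\mathcal{A}\mathcal{X}^{(k)}-\mathcal{A}\mathcal{X}^\ddagger\|_F^2\,\big|\,\mathcal{X}^{(0)}\big]\le\rho^k\,\|\mathcal{A}\mathcal{X}^{(0)}-\mathcal{A}\mathcal{X}^\ddagger\|_F^2.$$ If, in addition, the system $\mathcal{A}\mathcal{X}=\mathcal{A}\mathcal{X}^\ddagger$ has the unique solution $\mathcal{X}=\mathcal{X}^\ddagger$, then for every $k\ge0$, $$\mathbb{E}\big[\|\mathcal{X}^{(k)}-\mathcal{X}^\ddagger\|_F^2\,\big|\,\mathcal{X}^{(0)}\big]\le\kappa^2(\mathcal{A})\,\rho^k\,\|\mathcal{X}^{(0)}-\mathcal{X}^\ddagger\|_F^2,$$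 where $\kappa^2(\mathcal{A}):=\sigma_{\max}^2(\mathrm{bcirc}(\mathcal{A}^\dagger))\,\sigma_{\max}^2(\mathrm{bcirc}(\mathcal{A}))$.
   Context: All tensors are real third-order arrays. For $\mathcal{A}\in\mathbb{R}^{m\times n\times p}$ with frontal slices $\mathcal{A}_1,\dots,\mathcal{A}_p\in\mathbb{R}^{m\times n}$, $\mathrm{bcirc}(\mathcal{A})\in\mathbb{R}^{mp\times np}$ is the block-circulant matrix whose $(i,j)$ block ($i,j\in[p]$) is $\mathcal{A}_{((i-j)\bmod p)+1}$ (so its first block column is $\mathcal{A}_1,\mathcal{A}_2,\dots,\mathcal{A}_p$). For $\mathcal{B}\in\mathbb{R}^{n\times l\times p}$, $\mathrm{unfold}(\mathcal{B})\in\mathbb{R}^{np\times l}$ stacks the frontal slices $\mathcal{B}_1,\dots,\mathcal{B}_p$ vertically, and $\mathrm{fold}$ is its inverse. The t-product is $\mathcal{A}\mathcal{B}=\mathrm{fold}(\mathrm{bcirc}(\mathcal{A})\,\mathrm{unfold}(\mathcal{B}))\in\mathbb{R}^{m\times l\times p}$. The transpose $\mathcal{A}^*\in\mathbb{R}^{n\times m\times p}$ is obtained by transposing each frontal slice and reversing the order of the transposed slices $2$ through $p$ (so $\mathrm{bcirc}(\mathcal{A}^* )=\mathrm{bcirc}(\mathcal{A})^\top$). The pseudoinverse $\mathcal{A}^\dagger$ is the tensor with $\mathrm{bcirc}(\mathcal{A}^\dagger)=\mathrm{bcirc}(\mathcal{A})^\dagger$ (Moore–Penrose pseudoinverse). $\|\cdot\|_F$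 is the Frobenius norm (square root of the sum of squares of all entries). $\sigma_{\min}(\mathbf{M}),\sigma_{\max}(\mathbf{M})$ are the smallest and largest singular values of a matrix $\mathbf{M}$. For $\tau\subset[n]$, $\mathcal{A}_{:\tau:}\in\mathbb{R}^{m\times|\tau|\times p}$ consists of the lateral slices (columns) of $\mathcal{A}$ indexed by $\tau$, and $\mathcal{E}_\tau\in\mathbb{R}^{n\times|\tau|\times p}$ is the tensor whose first frontal slice consists of the columns of $I_n$ indexed by $\tau$ and whose other frontal slices are zero (so $\mathcal{A}\mathcal{E}_\tau=\mathcal{A}_{:\tau:}$). $\mathcal{P}([n])$ is the power set of $[n]=\{1,\dots,n\}$. TRBAGS method with step size $\omega$: given $\mathcal{X}^{(0)}$, for $k=1,2,\dots$ sample $\tau_k$ and set $\mathcal{X}^{(k)}=\mathcal{X}^{(k-1)}-\omega\,\mathcal{E}_{\tau_k}\mathcal{A}_{:\tau_k:}^*(\mathcal{A}\mathcal{X}^{(k-1)}-\mathcal{B})$. *)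

From HB Require Import structures.
From mathcomp Require Import all_boot all_order all_algebra.
From mathcomp Require Import classical_sets reals.
Set Implicit Arguments. Unset Strict Implicit. Unset Printing Implicit Defensive.
Import Order.TTheory GRing.Theory Num.Theory.
Local Open Scope ring_scope.

(* A real third-order tensor in R^{m x n x p}, given by its p frontal slices
   (slice k is the (k+1)-th frontal slice, 0-indexed). *)
Definition tensor (R : Type) (m n p : nat) := {ffun 'I_p -> 'M[R]_(m, n)}.

Section Tensors.
Variable R : realType.

Lemma ord_pos (p : nat) (i : 'I_p) : (0 < p)%N.
Proof. by apply: leq_ltn_trans (ltn_ord i). Qed.

Definition ord_subm (p : nat) (i j : 'I_p) : 'I_p :=
  Ordinal (ltn_pmod (i + p - j) (ord_pos i)).

Definition ord_negm (p : nat) (k : 'I_p) : 'I_p :=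
  Ordinal (ltn_pmod (p - k) (ord_pos k)).

Definition bcirc (m n p : nat) (A : tensor R m n p)
  : 'M[R]_(\sum_(i < p) m, \sum_(j < p) n) :=
  \mxblock_(i < p, j < p) A (ord_subm i j).

Definition tunfold (n l p : nat) (B : tensor R n l p)
  : 'M[R]_(\sum_(i < p) n, l) :=
  \mxcol_(i < p) B i.

Definition tfold (m l p : nat) (M : 'M[R]_(\sum_(i < p) m, l))
  : tensor R m l p :=
  [ffun k => submxcol M k].

Definition tprod (m n l p : nat) (A : tensor R m n p) (B : tensor R n l p)
  : tensor R m l p :=
  tfold (bcirc A *m tunfold B).

Definition ttr (m n p : nat) (A : tensor R m n p) : tensor R n m p :=
  [ffun k => (A (ord_negm k))^T].

Definition fro2 (m n p : nat) (A : tensor R m n p) : R :=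
  \sum_(k < p) \sum_(i < m) \sum_(j < n) (A k i j) ^+ 2.

Definition tcols (m n p : nat) (A : tensor R m n p) (tau : {set 'I_n})
  : tensor R m #|tau| p :=
  [ffun k => \matrix_(i < m, j < #|tau|) A k i (enum_val j)].

Definition Etau (n p : nat) (tau : {set 'I_n}) : tensor R n #|tau| p :=
  [ffun k => if val k == 0%N
             then \matrix_(i < n, j < #|tau|) ((i == enum_val j)%:R : R)
             else 0].

Definition sing_vals (a b : nat) (M : 'M[R]_(a, b)) : set R :=
  if (b <= a)%N
  then [set s : R | 0 <= s /\ eigenvalue (M^T *m M) (s ^+ 2)]%classic
  else [set s : R | 0 <= s /\ eigenvalue (M *m M^T) (s ^+ 2)]%classic.

Definition sigma_max (a b : nat) (M : 'M[R]_(a, b)) : R := sup (sing_vals M).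
Definition sigma_min (a b : nat) (M : 'M[R]_(a, b)) : R := inf (sing_vals M).

Definition is_mp_pinv (a b : nat) (M : 'M[R]_(a, b)) (X : 'M[R]_(b, a)) :=
  [/\ M *m X *m M = M, X *m M *m X = X,
      (M *m X)^T = M *m X & (X *m M)^T = X *m M].

Definition trbags_step (m n l p : nat) (omega : R) (A : tensor R m n p)
  (B : tensor R m l p) (tau : {set 'I_n}) (X : tensor R n l p)
  : tensor R n l p :=
  X - omega *: tprod (Etau p tau)
                 (tprod (ttr (tcols A tau)) (tprod A X - B)).

Definition trbags_iter (m n l p : nat) (omega : R) (A : tensor R m n p)
  (B : tensor R m l p) (X0 : tensor R n l p) (k : nat)
  (s : {ffun 'I_k -> {set 'I_n}}) : tensor R n l p :=
  foldl (fun X i => trbags_step omega A B (s i) X) X0 (enum 'I_k).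

(* Expectation of f(tau_1,...,tau_k) when tau_1,...,tau_k are sampled
   independently and uniformly from T. *)
Definition expect_iid (n k : nat) (T : {set {set 'I_n}})
  (f : {ffun 'I_k -> {set 'I_n}} -> R) : R :=
  (\sum_(s : {ffun 'I_k -> {set 'I_n}} | [forall i, s i \in T]) f s)
    / (#|T| ^ k)%:R.

Definition cmin (n : nat) (T : {set {set 'I_n}}) : nat :=
  \big[minn/#|T|]_(i < n) #|[set tau in T | i \in tau]|.

Definition sigmaT2 (m n p : nat) (A : tensor R m n p) (T : {set {set 'I_n}})
  : R :=
  \big[Num.max/0]_(tau in T) (sigma_max (bcirc (tcols A tau))) ^+ 2.

End Tensors.

From HB Require Import structures.
From mathcomp Require Import all_boot all_order all_algebra.
From mathcomp Require Import classical_sets reals complex spectral sesquilinear.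
From mathcomp Require Import ring lra zify.
Set Implicit Arguments. Unset Strict Implicit. Unset Printing Implicit Defensive.
Import Order.TTheory GRing.Theory Num.Theory.
Local Open Scope ring_scope.

(** Unfolding turns the t-product into multiplication by [bcirc A], and
   [bcirc (A_{:tau:}) = bcirc A * bcirc E_tau], so TRBAGS is a randomized block
   iteration on matrices.  By the normal equations of the least squares problem,
   one step maps the error [e = bcirc A (X - Xd)] to [e - omega K K^T e] with
   [K = bcirc (A_{:tau:})], whence
   [||e'||^2 <= ||e||^2 - (2 omega - omega^2 sigma^2) ||K^T e||^2].
   Averaging over [tau] in [T], every row of [bcirc(A)^T e] is kept by at least
   [c_min(T)] blocks, and [||bcirc(A)^T e||^2 >= sigma_min^2 ||e||^2] since [e] lies
   in the range of [bcirc A]: the expected squared error contracts by [rho], and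
   independence of the blocks iterates this [k] times.  The second bound follows
   from [||X - Xd|| <= sigma_max(A^+) ||bcirc A (X - Xd)||] (uniqueness makes
   [bcirc A] injective) and [||bcirc A (X0 - Xd)|| <= sigma_max(A) ||X0 - Xd||].
   The singular value estimates are Rayleigh quotient bounds for Gram matrices,
   obtained from the spectral theorem for their complexification. *)

Section Frobenius.
Variable R : realFieldType.
Implicit Types a b l : nat.

Definition mxdot a b (Y Z : 'M[R]_(a, b)) := \tr (Y^T *m Z).
Definition mxfro2 a b (Z : 'M[R]_(a, b)) := mxdot Z Z.

Lemma mxfro2E a b (Z : 'M[R]_(a, b)) : mxfro2 Z = \sum_i \sum_j Z i j ^+ 2.
Proof.
rewrite /mxfro2 /mxdot /mxtrace exchange_big /=; apply: eq_bigr => j _.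
by rewrite mxE; apply: eq_bigr => i _; rewrite mxE expr2.
Qed.

Lemma mxfro2_ge0 a b (Z : 'M[R]_(a, b)) : 0 <= mxfro2 Z.
Proof. by rewrite mxfro2E; do 2![apply: sumr_ge0 => ? _]; exact: sqr_ge0. Qed.

Lemma mxfro2_eq0 a b (Z : 'M[R]_(a, b)) : mxfro2 Z = 0 -> Z = 0.
Proof.
rewrite mxfro2E => /psumr_eq0P Z0; apply/matrixP => i j; rewrite mxE.
have /(_ i isT) := Z0 (fun i _ => sumr_ge0 _ (fun k _ => sqr_ge0 (Z i k))).
move/psumr_eq0P => /(_ (fun k _ => sqr_ge0 _) j isT) /eqP.
by rewrite sqrf_eq0 => /eqP.
Qed.

Lemma mxfro20 a b : mxfro2 (0 : 'M[R]_(a, b)) = 0.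
Proof. by rewrite /mxfro2 /mxdot trmx0 mul0mx mxtrace0. Qed.

Lemma mxdotC a b (Y Z : 'M[R]_(a, b)) : mxdot Y Z = mxdot Z Y.
Proof. by rewrite /mxdot -mxtrace_tr trmx_mul trmxK. Qed.

Lemma mxdotZl a b c (Y Z : 'M[R]_(a, b)) : mxdot (c *: Y) Z = c * mxdot Y Z.
Proof. by rewrite /mxdot linearZ /= -scalemxAl linearZ. Qed.

Lemma mxdotZr a b c (Y Z : 'M[R]_(a, b)) : mxdot Y (c *: Z) = c * mxdot Y Z.
Proof. by rewrite /mxdot -scalemxAr linearZ. Qed.

Lemma mxdot_mulmxl a b l (M : 'M[R]_(a, b)) (Y : 'M[R]_(b, l)) (Z : 'M[R]_(a, l)) :
  mxdot (M *m Y) Z = mxdot Y (M^T *m Z).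
Proof. by rewrite /mxdot trmx_mul mulmxA. Qed.

Lemma mxdot_mulmxr a b l (M : 'M[R]_(a, b)) (Y : 'M[R]_(a, l)) (Z : 'M[R]_(b, l)) :
  mxdot Y (M *m Z) = mxdot (M^T *m Y) Z.
Proof. by rewrite mxdotC mxdot_mulmxl mxdotC. Qed.

Lemma mxfro2B a b (Y Z : 'M[R]_(a, b)) :
  mxfro2 (Y - Z) = mxfro2 Y - 2 * mxdot Y Z + mxfro2 Z.
Proof.
rewrite /mxfro2 /mxdot.
have -> : (Y - Z)^T = Y^T - Z^T by rewrite linearB.
rewrite mulmxBl !mulmxBr !linearB /=.
rewrite -[\tr (Z^T *m Y)]mxtrace_tr trmx_mul trmxK; ring.
Qed.

Lemma mxfro2Z a b c (Z : 'M[R]_(a, b)) : mxfro2 (c *: Z) = c ^+ 2 * mxfro2 Z.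
Proof. by rewrite /mxfro2 mxdotZl mxdotZr mulrA expr2. Qed.

Lemma mxfro2_mxcol p (p_ : 'I_p -> nat) l (C : forall i, 'M[R]_(p_ i, l)) :
  mxfro2 (\mxcol_i C i) = \sum_i mxfro2 (C i).
Proof. by rewrite /mxfro2 /mxdot tr_mxcol mul_mxrow_mxcol raddf_sum. Qed.

Lemma mxfro2_trmx_mul_le a b (N : 'M[R]_(a, b)) hi : 0 <= hi ->
  (forall l (Z : 'M_(b, l)), mxfro2 (N *m Z) <= hi * mxfro2 Z) ->
  forall l (Y : 'M_(a, l)), mxfro2 (N^T *m Y) <= hi * mxfro2 Y.
Proof.
move=> hi_ge0 bnd l Y.
have frNTY : mxfro2 (N^T *m Y) = mxdot Y (N *m (N^T *m Y)).
  by rewrite /mxfro2 mxdot_mulmxl trmxK.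
have h := bnd _ (N^T *m Y).
have sq_ge0 := mxfro2_ge0 (hi *: Y - N *m (N^T *m Y)).
rewrite mxfro2B mxfro2Z mxdotZl -frNTY in sq_ge0.
have [hi_gt0|hi_le0] := ltrP 0 hi; first nra.
have hi0 : hi = 0 by apply/eqP; rewrite eq_le hi_le0 hi_ge0.
rewrite hi0 mul0r in h *; have NNTY0 : N *m (N^T *m Y) = 0.
  by apply: mxfro2_eq0; apply/eqP; rewrite eq_le h mxfro2_ge0.
by rewrite frNTY NNTY0 /mxdot mulmx0 mxtrace0 mul0r.
Qed.

Lemma mxfro2_gram_ge a b (N : 'M[R]_(a, b)) lo : 0 <= lo ->
  (forall l (Y : 'M_(b, l)), lo * mxfro2 Y <= mxfro2 (N *m Y)) ->
  forall l (Y : 'M_(b, l)), lo * mxfro2 (N *m Y) <= mxfro2 (N^T *m (N *m Y)).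
Proof.
move=> lo_ge0 bnd l Y.
have dotE : mxdot (N^T *m (N *m Y)) Y = mxfro2 (N *m Y).
  by rewrite mxdot_mulmxl trmxK.
have := mxfro2_ge0 (N^T *m (N *m Y) - lo *: Y).
rewrite mxfro2B mxfro2Z mxdotZr dotE.
have := ler_wpM2l lo_ge0 (bnd _ Y); nra.
Qed.

End Frobenius.

Section Rayleigh.
Local Open Scope sesquilinear_scope.
Import Num.Def.

Lemma mxtrace_diag_quad_bounds (C : numClosedFieldType) b l (W : 'M[C]_(b, l))
    (d : 'rV[C]_b) lo hi :
  (forall i, lo <= d 0 i <= hi) ->
  lo * \tr (W ^t conjC *m W) <= \tr (W ^t conjC *m (diag_mx d *m W))
    <= hi * \tr (W ^t conjC *m W).
Proof.
move=> d_bnd.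
have trE (D : 'rV[C]_b) : \tr (W ^t conjC *m (diag_mx D *m W)) =
    \sum_j \sum_i D 0 i * (W i j * (W i j)^*).
  rewrite /mxtrace; apply: eq_bigr => j _; rewrite mxE.
  by apply: eq_bigr => i _; rewrite mul_diag_mx !mxE; ring.
have -> : W ^t conjC *m W = W ^t conjC *m (diag_mx (const_mx 1) *m W).
  by rewrite diag_const_mx mul1mx.
rewrite !trE !mulr_sumr; apply/andP; split; apply: ler_sum => j _;
  rewrite mulr_sumr; apply: ler_sum => i _; rewrite [const_mx _ _ _]mxE mul1r;
  (apply: ler_wpM2r; first exact: mul_conjC_ge0); by case/andP: (d_bnd i).
Qed.

Variable R : rcfType.
Local Notation toC := (real_complex R).

Lemma map_mx_conj_real m n (A : 'M[R]_(m, n)) :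
  map_mx conjC (map_mx toC A) = map_mx toC A.
Proof.
apply/matrixP => i j; rewrite !mxE.
by apply/conj_Creal/complex_realP; exists (A i j).
Qed.

Lemma sym_rayleigh b (G : 'M[R]_b.+1) : G^T = G ->
  exists lo hi, [/\ eigenvalue G lo, eigenvalue G hi &
    forall l (Y : 'M[R]_(b.+1, l)),
      lo * mxfro2 Y <= mxdot Y (G *m Y) <= hi * mxfro2 Y].
Proof.
move=> G_sym; set Gc := map_mx toC G.
have GcT : Gc ^t conjC = Gc by rewrite -map_trmx map_mx_conj_real map_trmx G_sym.
have Gc_normal : Gc \is normalmx by apply/normalmxP; rewrite GcT.
have Gc_herm : Gc \is hermsymmx by rewrite is_hermitianmxE expr0 scale1r GcT.
have /orthomx_spectralP Gc_diag := Gc_normal.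
set P := spectralmx Gc in Gc_diag; set d := spectral_diag Gc in Gc_diag.
have P_unitary : P \is unitarymx := spectral_unitarymx Gc.
have PPt : P *m P ^t conjC = 1%:M by apply/unitarymxP.
have PtP : P ^t conjC *m P = 1%:M.
  by rewrite -invmx_unitary // mulVmx // unitarymx_unit.
rewrite invmx_unitary // in Gc_diag.
pose g i := complex.Re (d 0 i).
have dE i : d 0 i = toC (g i).
  have /mxOverP d_real := hermitian_spectral_diag_real Gc_herm.
  by rewrite RRe_real ?d_real.
have eig_g i : eigenvalue G (g i).
  rewrite eigenvalue_root_char -(fmorph_root toC) map_char_poly -/Gc.
  rewrite -eigenvalue_root_char; apply/eigenvalueP; exists (row i P).
    rewrite -row_mul [in X in row _ (_ *m X)]Gc_diag !mulmxA PPt mul1mx row_mul.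
    by rewrite row_diag_mx -scalemxAl -rowE dE.
  apply/eqP => /(congr1 (mulmx^~ (P ^t conjC))); rewrite mul0mx -row_mul PPt row1.
  by move/rowP/(_ i); rewrite !mxE eqxx /=; move/eqP; rewrite pnatr_eq0 eqxx.
case: (@arg_maxP _ _ _ ord0 predT g) => // ihi _ g_le_hi.
case: (@arg_minP _ _ _ ord0 predT g) => // ilo _ lo_le_g.
exists (g ilo), (g ihi); split => // l Y.
set Yc := map_mx toC Y; set W := P *m Yc.
have YcT : Yc ^t conjC = Yc^T by rewrite -map_trmx map_mx_conj_real.
have WT : W ^t conjC = Yc^T *m P ^t conjC by rewrite /W trmx_mul map_mxM YcT.
have quadE : toC (mxdot Y (G *m Y)) = \tr (W ^t conjC *m (diag_mx d *m W)).
  rewrite /mxdot -trace_map_mx !map_mxM -map_trmx -/Gc -/Yc [in LHS]Gc_diag WT /W.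
  by rewrite !mulmxA.
have normE : toC (mxfro2 Y) = \tr (W ^t conjC *m W).
  rewrite /mxfro2 /mxdot -trace_map_mx !map_mxM -map_trmx -/Yc WT /W mulmxA.
  by rewrite -(mulmxA _ _ P) PtP mulmx1.
rewrite -!(@lecR R) !rmorphM /= quadE normE; apply: mxtrace_diag_quad_bounds => i.
by rewrite dE !lecR; apply/andP; split; [exact: lo_le_g | exact: g_le_hi].
Qed.

End Rayleigh.

Section SingularValues.
Variable R : realType.

Definition gram_sing_vals a b (N : 'M[R]_(a, b)) :=
  [set s : R | 0 <= s /\ eigenvalue (N^T *m N) (s ^+ 2)]%classic.

Lemma sing_valsE a b (M : 'M[R]_(a, b)) :
  sing_vals M = if (b <= a)%N then gram_sing_vals M else gram_sing_vals M^T.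
Proof. by rewrite /sing_vals /gram_sing_vals trmxK. Qed.

Lemma gram_bounds a b (N : 'M[R]_(a, b.+1)) : exists lo hi,
  [/\ 0 <= lo, 0 <= hi,
    forall l (Y : 'M_(b.+1, l)), lo * mxfro2 Y <= mxfro2 (N *m Y) <= hi * mxfro2 Y,
    hi <= sup (gram_sing_vals N) ^+ 2 & inf (gram_sing_vals N) ^+ 2 <= lo].
Proof.
have gram_sym : (N^T *m N)^T = N^T *m N by rewrite trmx_mul trmxK.
have [lo [hi [eig_lo eig_hi bnd]]] := sym_rayleigh gram_sym.
have fro2NE l (Y : 'M_(b.+1, l)) : mxfro2 (N *m Y) = mxdot Y (N^T *m N *m Y).
  by rewrite /mxfro2 mxdot_mulmxl mulmxA.
have eig_range mu : eigenvalue (N^T *m N) mu -> [/\ 0 <= mu, lo <= mu & mu <= hi].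
  move=> /eigenvalueP [v v_eig v_neq0].
  have v_gt0 : 0 < mxfro2 v^T.
    rewrite lt_def mxfro2_ge0 andbT; apply/eqP => /mxfro2_eq0 /(congr1 trmx).
    by rewrite trmxK trmx0; apply/eqP.
  have quadE : mxdot v^T (N^T *m N *m v^T) = mu * mxfro2 v^T.
    by rewrite /mxfro2 /mxdot trmxK mulmxA v_eig -scalemxAl linearZ.
  have /andP [lo_le le_hi] := bnd _ v^T; rewrite quadE in lo_le le_hi.
  have quad_ge0 : 0 <= mu * mxfro2 v^T by rewrite -quadE -fro2NE mxfro2_ge0.
  split.
  - by rewrite -(pmulr_lge0 _ v_gt0).
  - by rewrite -(ler_pM2r v_gt0).
  - by rewrite -(ler_pM2r v_gt0).
have [lo_ge0 _ _] := eig_range _ eig_lo; have [hi_ge0 _ _] := eig_range _ eig_hi.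
have sv_hi : gram_sing_vals N (Num.sqrt hi) by split; rewrite ?sqrtr_ge0 ?sqr_sqrtr.
have sv_lo : gram_sing_vals N (Num.sqrt lo) by split; rewrite ?sqrtr_ge0 ?sqr_sqrtr.
exists lo, hi; split => //.
- by move=> l Y; rewrite fro2NE; exact: bnd.
- have ub : ubound (gram_sing_vals N) (Num.sqrt hi).
    move=> s [s_ge0 /eig_range [_ _ s_le]]; rewrite -(ler_sqrt _ hi_ge0) in s_le.
    by rewrite -[s in s <= _]ger0_norm // -sqrtr_sqr.
  have := ub_le_sup (ex_intro _ _ ub) sv_hi => sqrt_le.
  rewrite -[hi]sqr_sqrtr //; apply: lerXn2r; rewrite ?nnegrE ?sqrtr_ge0 //.
  exact: le_trans (sqrtr_ge0 _) sqrt_le.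
- have lb : lbound (gram_sing_vals N) 0 by move=> s [].
  have inf_ge0 := lb_le_inf (ex_intro _ _ sv_lo) lb.
  have inf_le := ge_inf (ex_intro _ _ lb) sv_lo.
  by rewrite -[lo]sqr_sqrtr //; apply: lerXn2r; rewrite ?nnegrE ?sqrtr_ge0.
Qed.

Lemma mxfro2_mul_le a b l (M : 'M[R]_(a, b)) (Y : 'M[R]_(b, l)) :
  mxfro2 (M *m Y) <= sigma_max M ^+ 2 * mxfro2 Y.
Proof.
rewrite /sigma_max sing_valsE; case: leqP => [le_ba|lt_ab].
- case: b M Y le_ba => [|b] M Y _.
    by rewrite [Y]flatmx0 mulmx0 !mxfro20 mulr0.
  have [lo [hi [_ _ bnd hi_le _]]] := gram_bounds M.
  have /andP [_ fro2_le] := bnd _ Y.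
  exact: le_trans fro2_le (ler_wpM2r (mxfro2_ge0 _) hi_le).
- case: a M Y lt_ab => [|a] M Y _.
    by rewrite [M *m Y]flatmx0 mxfro20 mulr_ge0 ?sqr_ge0 ?mxfro2_ge0.
  have [lo [hi [_ hi_ge0 bnd hi_le _]]] := gram_bounds M^T.
  have bndT l' (Z : 'M_(a.+1, l')) : mxfro2 (M^T *m Z) <= hi * mxfro2 Z.
    by have /andP [] := bnd _ Z.
  have := mxfro2_trmx_mul_le hi_ge0 bndT Y; rewrite trmxK => fro2_le.
  exact: le_trans fro2_le (ler_wpM2r (mxfro2_ge0 _) hi_le).
Qed.

Lemma sigma_min_mxfro2_le a b l (M : 'M[R]_(a, b)) (Y : 'M[R]_(b, l)) :
  sigma_min M ^+ 2 * mxfro2 (M *m Y) <= mxfro2 (M^T *m (M *m Y)).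
Proof.
rewrite /sigma_min sing_valsE; case: leqP => [le_ba|lt_ab].
- case: b M Y le_ba => [|b] M Y _.
    by rewrite [Y]flatmx0 mulmx0 mxfro20 mulr0 mxfro2_ge0.
  have [lo [hi [lo_ge0 _ bnd _ lo_le]]] := gram_bounds M.
  have bndM l' (Z : 'M_(b.+1, l')) : lo * mxfro2 Z <= mxfro2 (M *m Z).
    by have /andP [] := bnd _ Z.
  exact: le_trans (ler_wpM2r (mxfro2_ge0 _) lo_le) (mxfro2_gram_ge lo_ge0 bndM Y).
- case: a M Y lt_ab => [|a] M Y _.
    by rewrite [M *m Y]flatmx0 mxfro20 mulr0 mxfro2_ge0.
  have [lo [hi [_ _ bnd _ lo_le]]] := gram_bounds M^T.
  have /andP [fro2_ge _] := bnd _ (M *m Y).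
  exact: le_trans (ler_wpM2r (mxfro2_ge0 _) lo_le) fro2_ge.
Qed.

Lemma mxfro2_le_pinv a b l (M : 'M[R]_(a, b)) (X : 'M[R]_(b, a)) (D : 'M[R]_(b, l)) :
  M *m X *m M = M -> (forall D' : 'M_(b, l), M *m D' = 0 -> D' = 0) ->
  mxfro2 D <= sigma_max X ^+ 2 * mxfro2 (M *m D).
Proof.
move=> MXM M_inj.
have XMD : X *m (M *m D) = D.
  apply/eqP; rewrite -subr_eq0; apply/eqP; apply: M_inj.
  by rewrite mulmxBr !mulmxA MXM subrr.
by rewrite -{1}XMD; exact: mxfro2_mul_le.
Qed.

End SingularValues.

Lemma modn_addB_small p i j : (i < p)%N -> (j < p)%N ->
  ((i + p - j) %% p = if j <= i then i - j else i + p - j)%N.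
Proof.
move=> i_lt j_lt; case: leqP => ji.
  have -> : (i + p - j = (i - j) + p)%N by lia.
  by rewrite modnDr modn_small //; lia.
by rewrite modn_small //; lia.
Qed.

Lemma ord_negm_subm p (i j : 'I_p) : ord_negm (ord_subm i j) = ord_subm j i.
Proof.
have i_lt := ltn_ord i; have j_lt := ltn_ord j.
apply/val_inj => /=; rewrite (modn_addB_small i_lt j_lt) (modn_addB_small j_lt i_lt).
case: (leqP j i) => ji; case: (leqP i j) => ij.
- have -> : i = j :> nat by lia.
  by rewrite subnn subn0 modnn.
- by rewrite modn_small; lia.
- have -> : (p - (i + p - j) = j - i)%N by lia.
  by rewrite modn_small; lia.
- lia.
Qed.

Lemma ord_subm_eq0 p (i j : 'I_p) : (val (ord_subm i j) == 0)%N = (i == j).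
Proof.
have i_lt := ltn_ord i; have j_lt := ltn_ord j.
rewrite /= (modn_addB_small i_lt j_lt); apply/idP/eqP => [|->]; last first.
  by rewrite leqnn subnn.
by case: leqP => ji /eqP ij0; apply/val_inj => /=; lia.
Qed.

Section Unfolding.
Variable R : realType.

Lemma tfoldK n l p : cancel (@tfold R n l p) (@tunfold R n l p).
Proof.
move=> M; rewrite /tunfold /tfold; under eq_mxcol do rewrite ffunE.
exact: submxcolK.
Qed.

Lemma tunfoldK n l p : cancel (@tunfold R n l p) (@tfold R n l p).
Proof. by move=> X; apply/ffunP => k; rewrite ffunE /tunfold mxcolK. Qed.

Lemma tunfold_inj n l p : injective (@tunfold R n l p).
Proof. exact: can_inj (@tunfoldK n l p). Qed.

Lemma tunfold_tprod m n l p (A : tensor R m n p) (X : tensor R n l p) :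
  tunfold (tprod A X) = bcirc A *m tunfold X.
Proof. exact: tfoldK. Qed.

Lemma tunfoldB n l p (X Y : tensor R n l p) : tunfold (X - Y) = tunfold X - tunfold Y.
Proof. by rewrite /tunfold -mxcolN -mxcolD; apply: eq_mxcol => i; rewrite !ffunE. Qed.

Lemma tunfoldZ n l p c (X : tensor R n l p) : tunfold (c *: X) = c *: tunfold X.
Proof.
rewrite /tunfold -mul_mx_scalar mxcol_mul; apply: eq_mxcol => i.
by rewrite ffunE mul_mx_scalar.
Qed.

Lemma fro2E n l p (X : tensor R n l p) : fro2 X = mxfro2 (tunfold X).
Proof. by rewrite /tunfold mxfro2_mxcol; apply: eq_bigr => k _; rewrite mxfro2E. Qed.

Lemma bcirc_ttr m n p (A : tensor R m n p) : bcirc (ttr A) = (bcirc A)^T.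
Proof.
by rewrite /bcirc tr_mxblock; apply: eq_mxblock => i j; rewrite ffunE ord_negm_subm.
Qed.

Lemma bcirc_tcols m n p (A : tensor R m n p) (tau : {set 'I_n}) :
  bcirc (tcols A tau) = bcirc A *m bcirc (Etau R p tau).
Proof.
rewrite /bcirc mul_mxblock; apply: eq_mxblock => i k.
rewrite (bigD1 k) //= big1 ?addr0; last first.
  by move=> j /negbTE jk; rewrite ffunE ord_subm_eq0 jk mulmx0.
rewrite !ffunE ord_subm_eq0 eqxx; apply/matrixP => r c; rewrite !mxE.
rewrite (bigD1 (enum_val c)) //= !mxE eqxx mulr1 big1 ?addr0 //.
by move=> x /negbTE xc; rewrite mxE xc mulr0.
Qed.

Lemma fro2_tprodB_le m n l p (A : tensor R m n p) (X Y : tensor R n l p) :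
  fro2 (tprod A X - tprod A Y) <= sigma_max (bcirc A) ^+ 2 * fro2 (X - Y).
Proof. by rewrite !fro2E !tunfoldB !tunfold_tprod -mulmxBr; exact: mxfro2_mul_le. Qed.

Lemma fro2B_le_pinv m n l p (A : tensor R m n p) (Ad : tensor R n m p)
    (X Xd : tensor R n l p) :
  (forall Y : tensor R n l p, tprod A Y = tprod A Xd -> Y = Xd) ->
  bcirc A *m bcirc Ad *m bcirc A = bcirc A ->
  fro2 (X - Xd) <= sigma_max (bcirc Ad) ^+ 2 * fro2 (tprod A X - tprod A Xd).
Proof.
move=> Xd_unique AAdA; rewrite !fro2E !tunfoldB !tunfold_tprod -mulmxBr.
apply: mxfro2_le_pinv AAdA _ => D AD0.
have /Xd_unique/eqP : tprod A (Xd - tfold D) = tprod A Xd.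
  by apply: tunfold_inj; rewrite !tunfold_tprod tunfoldB tfoldK mulmxBr AD0 subr0.
rewrite subr_eq addrC -subr_eq subrr eq_sym => /eqP D0.
by rewrite -[D]tfoldK D0 -(subrr Xd) tunfoldB subrr.
Qed.

End Unfolding.

Section BlockSelection.
Variable R : realType.

Definition colsel n (tau : {set 'I_n}) : 'M[R]_(n, #|tau|) :=
  \matrix_(i < n, j < #|tau|) ((i == enum_val j)%:R).

Lemma trmx_bcirc_Etau_mul n l p (tau : {set 'I_n}) (W : 'M[R]_(\sum_(i < p) n, l)) :
  (bcirc (Etau R p tau))^T *m W = \mxcol_i ((colsel tau)^T *m submxcol W i).
Proof.
rewrite -[W in LHS]submxcolK /bcirc tr_mxblock mul_mxblock_mxrow.
apply: eq_mxcol => i; rewrite (bigD1 i) //= big1 ?addr0; last first.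
  by move=> j /negbTE ji; rewrite ffunE ord_subm_eq0 ji trmx0 mul0mx.
by rewrite ffunE ord_subm_eq0 eqxx.
Qed.

Lemma mxfro2_colsel n l (tau : {set 'I_n}) (Y : 'M[R]_(n, l)) :
  mxfro2 ((colsel tau)^T *m Y) = \sum_(r in tau) \sum_k Y r k ^+ 2.
Proof.
rewrite mxfro2E (big_enum_val (fun r => \sum_k Y r k ^+ 2)) /=.
apply: eq_bigr => c _; apply: eq_bigr => k _; rewrite !mxE.
rewrite (bigD1 (enum_val c)) //= !mxE eqxx mul1r big1 ?addr0 //.
by move=> x /negbTE xc; rewrite !mxE xc mul0r.
Qed.

Lemma cmin_le n (T : {set {set 'I_n}}) r : (cmin T <= #|[set tau in T | r \in tau]|)%N.
Proof. exact: (@bigmin_le _ nat _ #|T| r (fun i => #|[set tau in T | i \in tau]|)). Qed.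

(* Each row of [W] is kept by at least [cmin T] of the selections [E_tau^T]. *)
Lemma cmin_mxfro2_le n l p (T : {set {set 'I_n}}) (W : 'M[R]_(\sum_(i < p) n, l)) :
  (cmin T)%:R * mxfro2 W <= \sum_(tau in T) mxfro2 ((bcirc (Etau R p tau))^T *m W).
Proof.
have -> : \sum_(tau in T) mxfro2 ((bcirc (Etau R p tau))^T *m W) =
    \sum_(tau in T) \sum_i \sum_r
      (if r \in tau then \sum_k (submxcol W i) r k ^+ 2 else 0).
  apply: eq_bigr => tau _; rewrite trmx_bcirc_Etau_mul mxfro2_mxcol.
  by apply: eq_bigr => i _; rewrite mxfro2_colsel big_mkcond.
rewrite exchange_big /= -[W in mxfro2 W]submxcolK mxfro2_mxcol mulr_sumr.
apply: ler_sum => i _; set Y := submxcol W i.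
rewrite exchange_big mxfro2E mulr_sumr /=; apply: ler_sum => r _.
rewrite -big_mkcondr /=.
have -> : \sum_(tau in T | r \in tau) \sum_k Y r k ^+ 2 =
    \sum_(tau in [set tau in T | r \in tau]) \sum_k Y r k ^+ 2.
  by apply: eq_bigl => tau; rewrite inE.
rewrite sumr_const -[_ *+ #|_|]mulr_natl; apply: ler_wpM2r.
  by apply: sumr_ge0 => k _; exact: sqr_ge0.
by rewrite ler_nat cmin_le.
Qed.

End BlockSelection.

Lemma quad_ge0_eq0 (R : realFieldType) (u v : R) : 0 <= u -> 0 <= v ->
  (forall t, 0 <= t ^+ 2 * v - 2 * t * u) -> u = 0.
Proof.
move=> u_ge0 v_ge0 quad_ge0.
have v1_gt0 : 0 < v + 1 by lra.
set t := u / (v + 1).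
have tE : t * (v + 1) = u by rewrite /t mulfVK // gt_eqF.
have t_ge0 : 0 <= t by rewrite /t divr_ge0 // ltW.
have := quad_ge0 t; nra.
Qed.

Lemma lsq_normal_eq (R : realType) m n l p (A : tensor R m n p) (B : tensor R m l p)
    (Xd : tensor R n l p) :
  (forall X, fro2 (tprod A Xd - B) <= fro2 (tprod A X - B)) ->
  (bcirc A)^T *m (bcirc A *m tunfold Xd - tunfold B) = 0.
Proof.
move=> Xd_min; set r := _ - _; set V := _^T *m r.
apply/mxfro2_eq0/(quad_ge0_eq0 (mxfro2_ge0 V) (mxfro2_ge0 (bcirc A *m V))) => t.
have := Xd_min (Xd - t *: tfold V).
rewrite !fro2E !tunfoldB !tunfold_tprod tunfoldB tunfoldZ tfoldK.
rewrite mulmxBr -scalemxAr addrAC -/r (mxfro2B r) mxfro2Z mxdotZr mxdot_mulmxr -/V.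
rewrite /mxfro2; lra.
Qed.

Section TrbagsStep.
Variables (R : realType) (m n l p : nat) (omega : R).
Variables (A : tensor R m n p) (B : tensor R m l p) (T : {set {set 'I_n}}).
Variables (Xd X : tensor R n l p).
Hypothesis Xd_min : forall Y, fro2 (tprod A Xd - B) <= fro2 (tprod A Y - B).

Lemma tunfold_trbags_step tau :
  tunfold (trbags_step omega A B tau X) = tunfold X - omega *:
    (bcirc (Etau R p tau) *m ((bcirc (tcols A tau))^T *m (bcirc A *m tunfold X - tunfold B))).
Proof.
by rewrite /trbags_step tunfoldB tunfoldZ !tunfold_tprod bcirc_ttr tunfoldB tunfold_tprod.
Qed.

Lemma trbags_step_residual_le tau : tau \in T ->
  fro2 (tprod A (trbags_step omega A B tau X) - tprod A Xd) <=
  fro2 (tprod A X - tprod A Xd) - (2 * omega - omega ^+ 2 * sigmaT2 A T) *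
    mxfro2 ((bcirc (Etau R p tau))^T *m ((bcirc A)^T *m tunfold (tprod A X - tprod A Xd))).
Proof.
move=> tau_T; set S := bcirc (Etau R p tau); set K := bcirc (tcols A tau).
set e := tunfold (tprod A X - tprod A Xd).
have eE : e = bcirc A *m (tunfold X - tunfold Xd).
  by rewrite /e tunfoldB !tunfold_tprod mulmxBr.
have KS : K = bcirc A *m S := bcirc_tcols A tau.
(* The normal equations let the residual [A X - B] be replaced by [e] in the step. *)
have KTr : K^T *m (bcirc A *m tunfold X - tunfold B) = K^T *m e.
  have -> : bcirc A *m tunfold X - tunfold B = e + (bcirc A *m tunfold Xd - tunfold B).
    by rewrite eE mulmxBr addrA subrK.
  by rewrite mulmxDr [in X in _ + X]KS trmx_mul -mulmxA lsq_normal_eq // mulmx0 addr0.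
have stepE : tunfold (tprod A (trbags_step omega A B tau X) - tprod A Xd) =
    e - omega *: (K *m (K^T *m e)).
  rewrite tunfoldB !tunfold_tprod tunfold_trbags_step KTr mulmxBr -scalemxAr.
  rewrite [bcirc A *m (_ *m _)]mulmxA -bcirc_tcols -/K.
  by rewrite addrAC -mulmxBr -eE.
have KTe : K^T *m e = S^T *m ((bcirc A)^T *m e) by rewrite KS trmx_mul mulmxA.
have sigmaK : sigma_max K ^+ 2 <= sigmaT2 A T by exact: le_bigmax_cond.
have KKTe_le : mxfro2 (K *m (K^T *m e)) <= sigmaT2 A T * mxfro2 (K^T *m e).
  exact: le_trans (mxfro2_mul_le _ _) (ler_wpM2r (mxfro2_ge0 _) sigmaK).
rewrite !fro2E stepE -/e mxfro2B mxfro2Z mxdotZr mxdot_mulmxr -KTe.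
have := ler_wpM2l (sqr_ge0 omega) KKTe_le; rewrite /mxfro2 in KKTe_le *; lra.
Qed.

Lemma trbags_step_residual_sum_le :
  0 <= 2 * omega - omega ^+ 2 * sigmaT2 A T ->
  \sum_(tau in T) fro2 (tprod A (trbags_step omega A B tau X) - tprod A Xd) <=
  (#|T|%:R - (2 * omega - omega ^+ 2 * sigmaT2 A T) * (cmin T)%:R
     * sigma_min (bcirc A) ^+ 2) * fro2 (tprod A X - tprod A Xd).
Proof.
set c := 2 * omega - _ => c_ge0.
apply: le_trans (ler_sum _ (fun tau tau_T => trbags_step_residual_le tau_T)) _.
rewrite sumrB sumr_const -mulr_sumr -[_ *+ #|_|]mulr_natl fro2E.
rewrite -/c; set e := tunfold _; set W := (bcirc A)^T *m e.
have sel := cmin_mxfro2_le T W.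
have sing : sigma_min (bcirc A) ^+ 2 * mxfro2 e <= mxfro2 W.
  by rewrite /W /e tunfoldB !tunfold_tprod -mulmxBr; exact: sigma_min_mxfro2_le.
have := ler_wpM2l c_ge0 sel.
have := ler_wpM2l c_ge0 (ler_wpM2l (ler0n _ (cmin T)) sing).
lra.
Qed.

End TrbagsStep.

Section Iteration.
Variables (S V : Type).

Definition ffun_rcons k (s : {ffun 'I_k -> S}) (x : S) : {ffun 'I_k.+1 -> S} :=
  [ffun i => if unlift ord_max i is Some j then s j else x].

Definition iterate (F : S -> V -> V) k (s : {ffun 'I_k -> S}) (x : V) : V :=
  foldl (fun y i => F (s i) y) x (enum 'I_k).

Lemma iterate0 F (s : {ffun 'I_0 -> S}) x : iterate F s x = x.
Proof. by rewrite /iterate enum_ord0. Qed.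

Lemma iterate_rcons F k (s : {ffun 'I_k -> S}) y x :
  iterate F (ffun_rcons s y) x = F y (iterate F s x).
Proof.
have widen_lift (i : 'I_k) (le_k : (k <= k.+1)%N) : widen_ord le_k i = lift ord_max i.
  by apply/val_inj; rewrite [RHS]lift_max.
rewrite /iterate enum_ordSr foldl_rcons ffunE unlift_none; congr (F y _).
elim: (enum 'I_k) x => //= i e IH x.
by rewrite widen_lift ffunE liftK IH.
Qed.

End Iteration.

Lemma sum_ffun_rcons (V : nmodType) (S : finType) k (T : {set S})
    (G : {ffun 'I_k.+1 -> S} -> V) :
  \sum_(s : {ffun 'I_k.+1 -> S} | [forall i, s i \in T]) G s =
  \sum_(s : {ffun 'I_k -> S} | [forall i, s i \in T]) \sum_(x in T) G (ffun_rcons s x).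
Proof.
rewrite pair_big_dep /=.
rewrite (reindex (fun sx : {ffun 'I_k -> S} * S => ffun_rcons sx.1 sx.2)) /=.
  apply: eq_bigl => -[s x] /=.
  apply/forallP/andP => [sxT|[/forallP sT xT] i].
    split; last by have := sxT ord_max; rewrite ffunE unlift_none.
    by apply/forallP => j; have := sxT (lift ord_max j); rewrite ffunE liftK.
  by rewrite ffunE; case: unliftP => [j _|_]; [exact: sT|exact: xT].
exists (fun s => ([ffun j => s (lift ord_max j)], s ord_max)).
  move=> [s x] _; rewrite /= ffunE unlift_none; congr pair.
  by apply/ffunP => j; rewrite !ffunE liftK.
move=> s _; apply/ffunP => i; rewrite ffunE.
by case: unliftP => [j ->|->]; rewrite ?ffunE.
Qed.

Section Expectation.
Variables (R : realType) (n k : nat) (T : {set {set 'I_n}}).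

Lemma expect_iid_le (f g : {ffun 'I_k -> {set 'I_n}} -> R) :
  (forall s, f s <= g s) -> expect_iid T f <= expect_iid T g.
Proof.
move=> fg; apply: ler_wpM2r; first by rewrite invr_ge0 ler0n.
by apply: ler_sum => s _.
Qed.

Lemma expect_iid_mull (f : {ffun 'I_k -> {set 'I_n}} -> R) c :
  expect_iid T (fun s => c * f s) = c * expect_iid T f.
Proof. by rewrite /expect_iid -mulr_sumr mulrA. Qed.

End Expectation.

Section ExpectedContraction.
Variables (R : realType) (n : nat) (V : Type) (T : {set {set 'I_n}}).
Variables (F : {set 'I_n} -> V -> V) (f : V -> R) (r : R).
Hypotheses (T_gt0 : (0 < #|T|)%N) (f_ge0 : forall x, 0 <= f x).
Hypothesis F_contract : forall x, \sum_(tau in T) f (F tau x) <= #|T|%:R * r * f x.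

Lemma contraction_rate_lt0 : r < 0 -> forall x, f x = 0.
Proof.
move=> r_lt0 x; apply/eqP; rewrite eq_le f_ge0 andbT.
have sum_ge0 : 0 <= \sum_(tau in T) f (F tau x) by apply: sumr_ge0.
have Tr_lt0 : #|T|%:R * r < 0 by rewrite pmulr_rlt0 ?ltr0n.
have := le_trans sum_ge0 (F_contract x); have := f_ge0 x; nra.
Qed.

Lemma sum_iterate_le x0 k : 0 <= r ->
  \sum_(s : {ffun 'I_k -> {set 'I_n}} | [forall i, s i \in T]) f (iterate F s x0)
    <= (#|T|%:R * r) ^+ k * f x0.
Proof.
move=> r_ge0; elim: k => [|k IH].
  rewrite (eq_bigl xpredT); last by move=> s; apply/forallP => -[].
  under eq_bigr do rewrite iterate0.
  by rewrite sumr_const card_ffun card_ord expn0 mulr1n expr0 mul1r.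
rewrite sum_ffun_rcons.
apply: le_trans (_ : \sum_(s : {ffun 'I_k -> {set 'I_n}} | [forall i, s i \in T])
    #|T|%:R * r * f (iterate F s x0) <= _).
  apply: ler_sum => s _; under eq_bigr do rewrite iterate_rcons; exact: F_contract.
rewrite -mulr_sumr exprS -[X in _ <= X]mulrA.
by apply: ler_wpM2l IH; rewrite mulr_ge0 ?ler0n.
Qed.

Lemma expect_iterate_le x0 k :
  expect_iid T (fun s : {ffun 'I_k -> {set 'I_n}} => f (iterate F s x0)) <= r ^+ k * f x0.
Proof.
have [r_ge0|r_lt0] := lerP 0 r; last first.
  rewrite /expect_iid big1 ?mul0r; last by move=> s _; exact: contraction_rate_lt0.
  by rewrite contraction_rate_lt0 // mulr0.
rewrite /expect_iid natrX ler_pdivrMr ?exprn_gt0 ?ltr0n //.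
by rewrite mulrAC -exprMn [r * _]mulrC; exact: sum_iterate_le.
Qed.

Lemma expect_iterate_transfer_le (g : V -> R) a b x0 k :
  (forall x, 0 <= g x) -> 0 <= a -> (forall x, g x <= a * f x) -> f x0 <= b * g x0 ->
  expect_iid T (fun s : {ffun 'I_k -> {set 'I_n}} => g (iterate F s x0))
    <= a * b * r ^+ k * g x0.
Proof.
move=> g_ge0 a_ge0 g_le f_le.
have [r_ge0|r_lt0] := lerP 0 r; last first.
  have g0 x : g x = 0.
    apply/eqP; rewrite eq_le g_ge0 andbT; apply: le_trans (g_le x) _.
    by rewrite contraction_rate_lt0 // mulr0.
  rewrite /expect_iid big1; last by move=> s _; exact: g0.
  by rewrite mul0r g0 mulr0.
apply: le_trans (_ : expect_iid T (fun s : {ffun 'I_k -> {set 'I_n}} =>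
    a * f (iterate F s x0)) <= _).
  by apply: expect_iid_le => s; exact: g_le.
rewrite expect_iid_mull.
apply: le_trans (ler_wpM2l a_ge0 (expect_iterate_le x0 k)) _.
apply: le_trans (ler_wpM2l a_ge0 (ler_wpM2l (exprn_ge0 k r_ge0) f_le)) _.
by rewrite !mulrA [a * _ * b]mulrAC.
Qed.

End ExpectedContraction.

Theorem theorem2 (R : realType) (m n l p : nat)
  (A : tensor R m n p) (B : tensor R m l p) (T : {set {set 'I_n}})
  (omega : R) (X0 Xd : tensor R n l p) :
  (0 < #|T|)%N ->
  0 < omega ->
  (forall X : tensor R n l p,
     fro2 (tprod A Xd - B) <= fro2 (tprod A X - B)) ->
  2 * omega - omega ^+ 2 * sigmaT2 A T > 0 ->
  let rho := 1 - (2 * omega - omega ^+ 2 * sigmaT2 A T)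
                 * ((cmin T)%:R / (#|T|)%:R)
                 * (sigma_min (bcirc A)) ^+ 2 in
  (forall k : nat,
     expect_iid (k:=k) T (fun s => fro2 (tprod A (trbags_iter omega A B X0 s)
                                  - tprod A Xd))
     <= rho ^+ k * fro2 (tprod A X0 - tprod A Xd)) /\
  ((forall X : tensor R n l p, tprod A X = tprod A Xd -> X = Xd) ->
   forall Ad : tensor R n m p, is_mp_pinv (bcirc A) (bcirc Ad) ->
   let kappa2 := (sigma_max (bcirc Ad)) ^+ 2 * (sigma_max (bcirc A)) ^+ 2 in
   forall k : nat,
     expect_iid (k:=k) T (fun s => fro2 (trbags_iter omega A B X0 s - Xd))
     <= kappa2 * rho ^+ k * fro2 (X0 - Xd)).
Proof.
move=> T_gt0 _ Xd_min c_gt0 rho.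
pose res X := fro2 (tprod A X - tprod A Xd).
have res_ge0 X : 0 <= res X by rewrite /res fro2E mxfro2_ge0.
have contract X :
    \sum_(tau in T) res (trbags_step omega A B tau X) <= #|T|%:R * rho * res X.
  have -> : #|T|%:R * rho = #|T|%:R - (2 * omega - omega ^+ 2 * sigmaT2 A T)
      * (cmin T)%:R * sigma_min (bcirc A) ^+ 2.
    by rewrite /rho; field; rewrite pnatr_eq0 -lt0n.
  exact: trbags_step_residual_sum_le Xd_min (ltW c_gt0).
split=> [k|Xd_unique Ad [AAdA _ _ _] kappa2 k].
  exact: expect_iterate_le T_gt0 res_ge0 contract X0 k.
apply: (expect_iterate_transfer_le T_gt0 res_ge0 contract (g := fun X => fro2 (X - Xd))).
- by move=> X; rewrite fro2E mxfro2_ge0.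
- exact: sqr_ge0.
- by move=> X; exact: fro2B_le_pinv AAdA.
- exact: fro2_tprodB_le.
Qed.
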